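(* Let $(R,\mathfrak m)$ be a noetherian local ring and $M$ an $R$-module. Let $(\mathfrak p_i)_{i\in\mathbb N}$ be a sequence of prime ideals with $\mathfrak p_i\in\operatorname{Att}_R(M)$ for all $i$, and assume that $\mathfrak q:=\bigcap_{i\in\mathbb N}\mathfrak p_i$ is a prime ideal of $R$. Then $\mathfrak q\in\operatorname{Att}_R(M)$.
   Context: For an arbitrary $R$-module $N$, $\operatorname{Att}_R(N)$ is the set of prime ideals $\mathfrak p$ of $R$ such that $\mathfrak p=\operatorname{Ann}_R(N/U)$ for some $R$-submodule $U\subseteq N$. *)

From HB Require Import structures.
From mathcomp Require Import all_boot all_algebra.
Set Implicit Arguments. Unset Strict Implicit. Unset Printing Implicit Defensive.
Import GRing.Theory.
Local Open Scope ring_scope.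

Section CommAlg.
Variable R : comNzRingType.

Definition is_ideal (I : R -> Prop) : Prop :=
  [/\ I 0, (forall x y, I x -> I y -> I (x + y)) & (forall r x, I x -> I (r * x))].

Definition is_prime_ideal (I : R -> Prop) : Prop :=
  [/\ is_ideal I, ~ I 1 & (forall x y, I (x * y) -> I x \/ I y)].

Definition is_maximal_ideal (I : R -> Prop) : Prop :=
  [/\ is_ideal I, ~ I 1 &
      (forall J : R -> Prop, is_ideal J -> (forall x, I x -> J x) -> ~ J 1 ->
         forall x, J x -> I x)].

Definition noetherian_ring : Prop :=
  forall I : nat -> R -> Prop,
    (forall n, is_ideal (I n)) ->
    (forall n x, I n x -> I n.+1 x) ->
    exists N, forall n x, (N <= n)%N -> I n x -> I N x.

Definition local_ring_with (m : R -> Prop) : Prop :=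
  is_maximal_ideal m /\
  forall J : R -> Prop, is_maximal_ideal J -> forall x, J x <-> m x.

Variable M : lmodType R.

Definition is_submodule (U : M -> Prop) : Prop :=
  [/\ U 0, (forall x y, U x -> U y -> U (x + y)) & (forall (r : R) x, U x -> U (r *: x))].

(* Ann_R(M/U) = { r | r M ⊆ U } *)
Definition ann_quot (U : M -> Prop) : R -> Prop := fun r => forall x : M, U (r *: x).

Definition attached_prime (p : R -> Prop) : Prop :=
  is_prime_ideal p /\
  exists U : M -> Prop, is_submodule U /\ forall r, p r <-> ann_quot U r.

End CommAlg.

From HB Require Import structures.
From mathcomp Require Import all_boot all_algebra.

(* The annihilator of M / (∩_j U_j) is ∩_j Ann(M / U_j), since r M ⊆ ∩_j U_j
   exactly when r M ⊆ U_j for every j.  Intersecting, for every i, all the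
   submodules U with Ann(M/U) = p_i therefore gives a submodule whose
   annihilator is ∩_i p_i; when that intersection is prime it is attached. *)

Section AttachedPrimes.

Variables (R : comNzRingType) (M : lmodType R).

Lemma is_submodule_bigcap (I : Type) (U : I -> M -> Prop) :
  (forall i, is_submodule (U i)) -> is_submodule (fun x => forall i, U i x).
Proof.
move=> subU; split.
- by move=> i; have [] := subU i.
- by move=> x y Ux Uy i; have [_ UD _] := subU i; apply: UD.
- by move=> r x Ux i; have [_ _ UZ] := subU i; apply: UZ.
Qed.

Lemma ann_quot_bigcap (I : Type) (U : I -> M -> Prop) (r : R) :
  ann_quot (fun x => forall i, U i x) r <-> forall i, ann_quot (U i) r.
Proof. by split=> Hr => [i x | x i]; apply: Hr. Qed.

Lemma attached_prime_bigcap (I : Type) (p : I -> R -> Prop) :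
  (forall i, attached_prime M (p i)) ->
  is_prime_ideal (fun r => forall i, p i r) ->
  attached_prime M (fun r => forall i, p i r).
Proof.
move=> att_p prime_q; split=> //.
(* Indexing by all pairs (i, U) avoids choosing one U per i. *)
pose witness (iU : I * (M -> Prop)) :=
  is_submodule iU.2 /\ forall r, p iU.1 r <-> ann_quot iU.2 r.
pose U (j : {iU | witness iU}) := (proj1_sig j).2.
exists (fun x => forall j, U j x); split.
  by apply: is_submodule_bigcap => j; have [] := proj2_sig j.
move=> r; split=> [Hr | /ann_quot_bigcap Hr i].
- by apply/ann_quot_bigcap => j; apply/(proj2 (proj2_sig j)).
- have [_ [V [subV annV]]] := att_p i.
  exact/annV/(Hr (exist witness (i, V) (conj subV annV))).
Qed.

End AttachedPrimes.

Theorem theorem1p12 (R : comNzRingType) (m : R -> Prop) (M : lmodType R)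
  (p : nat -> R -> Prop) :
  noetherian_ring R -> local_ring_with m ->
  (forall i, attached_prime M (p i)) ->
  is_prime_ideal (fun r => forall i, p i r) ->
  attached_prime M (fun r => forall i, p i r).
Proof. by move=> _ _; apply: attached_prime_bigcap. Qed.
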